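(* For every signature $\Sigma$, the data $\mathcal F_\Sigma$ described below form a category with families. Moreover, if the variable system has the de Bruijn property, then $\mathcal F_\Sigma$ is a contextual category with families.
   Context: Fix an infinite set $V$ of variables with decidable equality, and a fresh variable provider: functions $\varphi,\mathsf{fr}$ assigning to each finite $X\subseteq V$ an inhabited subset $\varphi(X)\subseteq V\setminus X$ and an element $\mathsf{fr}(X)\in\varphi(X)$. The variable system has the de Bruijn property if $\varphi(X)=\{\mathsf{fr}(X)\}$ for all finite $X$. Fix disjoint sets $F$ (function symbols) and $T$ (type symbols) with decidable equality. Preelements are terms built from variables and symbols of $F$; a pretype is $S(t_1,\ldots,t_n)$ with $S\in T$ and $t_i$ preelements. $\mathrm{V}(E)$ is the set of variables of an expression $E$, $\equiv$ is syntactic identity, and $E[\bar a/\bar x]$ is simultaneous substitution. A precontext is a sequence $\Gamma=x_1:A_1,\ldots,x_n:A_n$ of pretypes with $x_k\in\varphi(\{x_1,\ldots,x_{k-1}\})$ and $\mathrm{V}(A_k)\subseteq\{x_1,\ldots,x_{k-1}\}$; $\mathrm{OV}(\Gamma)=x_1,\ldots,x_n$, $\mathrm{V}(\Gamma)=\{x_1,\ldots,x_n\}$, $\mathrm{Fresh}(\Gamma)=\varphi(\mathrm{V}(\Gamma))$, $\mathrm{fresh}(\Gamma)=\mathsf{fr}(\mathrm{V}(\Gamma))$, $E[\bar a/\Gamma]=E[\bar a/x_1,\ldots,x_n]$. Top variables: $\mathrm{TV}(\langle\rangle)=\emptyset$, $\mathrm{TV}(\Gamma,x:A)=(\mathrm{TV}(\Gamma)\setminus\mathrm{V}(A))\cup\{x\}$.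 A determining sequence for $\Gamma$ is a strictly increasing $\bar i=i_1,\ldots,i_k$ in $\{1,\ldots,n\}$ with $\mathrm{TV}(\Gamma)\subseteq\{x_{i_1},\ldots,x_{i_k}\}$; for $\bar a=a_1,\ldots,a_n$ put $\bar a_{\bar i}=a_{i_1},\ldots,a_{i_k}$. A type predeclaration is $(\Gamma,S,\bar i)$ with $S\in T$, $\bar i$ determining; a function predeclaration is $(\Gamma,f,\bar i,U)$ with $f\in F$, $\bar i$ determining, $U$ a pretype with $\mathrm{V}(U)\subseteq\mathrm{V}(\Gamma)$. A presignature is a set $\Sigma$ of predeclarations with no symbol declared twice. Judgements are ''$\Gamma$ context'', ''$A$ type $(\Gamma)$'', ''$a:A\ (\Gamma)$''. $\mathcal{J}(\Sigma)$ is the smallest set of judgements closed under: (R1) $\langle\rangle$ context; (R2) from $\Gamma$ context and $A$ type $(\Gamma)$ infer $\Gamma,x:A$ context, for $x\in\mathrm{Fresh}(\Gamma)$; (R3) from $x_1:A_1,\ldots,x_n:A_n$ context infer $x_i:A_i\ (x_1:A_1,\ldots,x_n:A_n)$; (R4) if $(\Gamma,S,\bar i)\in\Sigma$ and $\bar a:\Delta\to\Gamma$, infer $S(\bar a_{\bar i})$ type $(\Delta)$; (R5) if $(\Gamma,f,\bar i,U)\in\Sigma$, $\bar a:\Delta\to\Gamma$ and $U[\bar a/\Gamma]$ type $(\Delta)$, infer $f(\bar a_{\bar i}):U[\bar a/\Gamma]\ (\Delta)$. Here, for $\Gamma=x_1:A_1,\ldots,x_n:A_n$, the context map ''$\bar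 a:\Delta\to\Gamma$'' abbreviates the $n+2$ judgements $\Delta$ context, $\Gamma$ context, and $a_k:A_k[a_1,\ldots,a_{k-1}/x_1,\ldots,x_{k-1}]\ (\Delta)$ for $k=1,\ldots,n$. $\Sigma$ is a signature if ($\Gamma$ context)$\in\mathcal{J}(\Sigma)$ whenever $(\Gamma,S,\bar i)\in\Sigma$, and ($U$ type $(\Gamma)$)$\in\mathcal{J}(\Sigma)$ whenever $(\Gamma,f,\bar i,U)\in\Sigma$. A category with families (cwf) consists of: a category $\mathcal C$ with a terminal object $\top$; for each object $\Gamma$ a class $\mathrm{Ty}(\Gamma)$, and for $f:\Delta\to\Gamma$ a function $A\mapsto A\{f\}:\mathrm{Ty}(\Gamma)\to\mathrm{Ty}(\Delta)$ with $A\{1\}=A$, $A\{f\circ g\}=A\{f\}\{g\}$; for $A\in\mathrm{Ty}(\Gamma)$ an object $\Gamma.A$ and a morphism $\mathrm{p}(A)=\mathrm{p}_\Gamma(A):\Gamma.A\to\Gamma$; for $A\in\mathrm{Ty}(\Gamma)$ a class $\mathrm{Tm}(\Gamma,A)$ and for $f:\Delta\to\Gamma$ a function $a\mapsto a\{f\}:\mathrm{Tm}(\Gamma,A)\to\mathrm{Tm}(\Delta,A\{f\})$ with $a\{1\}=a$, $a\{f\circ g\}=a\{f\}\{g\}$; for each $A\in\mathrm{Ty}(\Gamma)$ an element $\mathrm{v}_A\in\mathrm{Tm}(\Gamma.A,A\{\mathrm{p}(A)\})$; for $f:\Delta\to\Gamma$ and $a\in\mathrm{Tm}(\Delta,A\{f\})$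 a morphism $\langle f,a\rangle_A:\Delta\to\Gamma.A$ such that $\mathrm{p}(A)\circ\langle f,a\rangle_A=f$, $\mathrm{v}_A\{\langle f,a\rangle_A\}=a$, $\langle\mathrm{p}(A)\circ h,\mathrm{v}_A\{h\}\rangle_A=h$ for every $h:\Delta\to\Gamma.A$, and $\langle f,a\rangle_A\circ g=\langle f\circ g,a\{g\}\rangle_A$. A cwf is contextual if every object $\Gamma$ equals $\top.A_1.\cdots.A_n$ for a unique sequence $A_1\in\mathrm{Ty}(\top)$, $A_2\in\mathrm{Ty}(\top.A_1)$, $\ldots$, $A_n\in\mathrm{Ty}(\top.A_1.\cdots.A_{n-1})$, $n\ge 0$. The data $\mathcal F_\Sigma$: objects are precontexts $\Gamma$ with ($\Gamma$ context)$\in\mathcal{J}(\Sigma)$; morphisms $\Delta\to\Gamma$ are triples $(\Delta,\Gamma,\bar a)$ with $\bar a:\Delta\to\Gamma$ a context map in $\mathcal{J}(\Sigma)$; composition $(\Gamma,\Theta,\bar t)\circ(\Delta,\Gamma,\bar s)=(\Delta,\Theta,(t_1[\bar s/\Gamma],\ldots,t_k[\bar s/\Gamma]))$; identity $(\Gamma,\Gamma,\mathrm{OV}(\Gamma))$; terminal object the empty context $\langle\rangle$. $\mathrm{Ty}(\Gamma)=\{(\Gamma,A): (A\text{ type }(\Gamma))\in\mathcal{J}(\Sigma)\}$ with $(\Gamma,A)\{(\Delta,\Gamma,\bar a)\}=(\Delta,A[\bar a/\Gamma])$; $\mathrm{Tm}(\Gamma,(\Gamma,A))=\{((\Gamma,A),a):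 (a:A\ (\Gamma))\in\mathcal{J}(\Sigma)\}$ with $((\Gamma,A),a)\{(\Delta,\Gamma,\bar a)\}=((\Delta,A[\bar a/\Gamma]),a[\bar a/\Gamma])$. For $\mathrm S=(\Gamma,S)\in\mathrm{Ty}(\Gamma)$: $\Gamma.\mathrm S=\langle\Gamma,\mathrm{fresh}(\Gamma):S\rangle$, $\mathrm{p}_\Gamma(\mathrm S)=(\Gamma.\mathrm S,\Gamma,\mathrm{OV}(\Gamma))$, $\mathrm{v}_{\mathrm S}=((\Gamma.\mathrm S,S),\mathrm{fresh}(\Gamma))$, and $\langle(\Delta,\Gamma,\bar s),((\Delta,S[\bar s/\Gamma]),b)\rangle_{\mathrm S}=(\Delta,\Gamma.\mathrm S,(\bar s,b))$. *)

From Stdlib Require Import List Arith Sorted.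
Import ListNotations.
Set Implicit Arguments.

(* Variable systems: an infinite set V of variables with decidable     *)
(* equality, and a fresh variable provider (phi, fr).  Finite subsets   *)
(* X of V are represented by lists; phi and fr are required to depend   *)
(* only on the set of elements of the list (phi_ext, fr_ext).           *)
Record VarSystem := {
  var : Type;
  var_eq_dec : forall x y : var, {x = y} + {x <> y};
  var_infinite : forall X : list var, exists x, ~ In x X;
  phi : list var -> var -> Prop;
  fr : list var -> var;
  phi_ext : forall X Y : list var, (forall x, In x X <-> In x Y) ->
            forall y, phi X y <-> phi Y y;
  fr_ext : forall X Y : list var, (forall x, In x X <-> In x Y) -> fr X = fr Y;
  phi_avoid : forall X y, phi X y -> ~ In y X;
  fr_phi : forall X, phi X (fr X)
}.

Definition de_Bruijn (VS : VarSystem) : Prop :=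
  forall (X : list (var VS)) (y : var VS), phi VS X y <-> y = fr VS X.

(* Objects, morphisms, types, terms are raw elements together with      *)
(* membership predicates (the "classes" of the paper); equality is      *)
(* Leibniz equality of raw elements.                                    *)
(*   isMor f D G  means  f : D -> G                                     *)
(*   isTy G A     means  A in Ty(G)                                     *)
(*   isTm G A a   means  a in Tm(G, A)                                  *)
(*   tsub A f = A{f},  msub a f = a{f},  ext G A = G.A,                 *)
(*   pr G A = p_G(A),  vr G A = v_A,  pair G A f a = <f, a>_A            *)
Record cwf_data := {
  Ob : Type;
  Mor : Type;
  isOb : Ob -> Prop;
  isMor : Mor -> Ob -> Ob -> Prop;
  comp : Mor -> Mor -> Mor;          (* comp g f = g o f *)
  idm : Ob -> Mor;
  top : Ob;
  TyE : Type;
  isTy : Ob -> TyE -> Prop;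
  tsub : TyE -> Mor -> TyE;
  TmE : Type;
  isTm : Ob -> TyE -> TmE -> Prop;
  msub : TmE -> Mor -> TmE;
  ext : Ob -> TyE -> Ob;
  pr : Ob -> TyE -> Mor;
  vr : Ob -> TyE -> TmE;
  pair : Ob -> TyE -> Mor -> TmE -> Mor
}.

Definition is_cwf (C : cwf_data) : Prop :=
  (forall D G H f g, isOb C D -> isOb C G -> isOb C H ->
     isMor C f D G -> isMor C g G H -> isMor C (comp C g f) D H) /\
  (forall G, isOb C G -> isMor C (idm C G) G G) /\
  (forall A B D E f g h, isOb C A -> isOb C B -> isOb C D -> isOb C E ->
     isMor C f A B -> isMor C g B D -> isMor C h D E ->
     comp C h (comp C g f) = comp C (comp C h g) f) /\
  (forall D G f, isOb C D -> isOb C G -> isMor C f D G ->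
     comp C (idm C G) f = f /\ comp C f (idm C D) = f) /\
  isOb C (top C) /\
  (forall G, isOb C G -> exists f, isMor C f G (top C) /\
     forall g, isMor C g G (top C) -> g = f) /\
  (forall D G f A, isOb C D -> isOb C G -> isMor C f D G -> isTy C G A ->
     isTy C D (tsub C A f)) /\
  (forall G A, isOb C G -> isTy C G A -> tsub C A (idm C G) = A) /\
  (forall E D G f g A, isOb C E -> isOb C D -> isOb C G ->
     isMor C f D G -> isMor C g E D -> isTy C G A ->
     tsub C A (comp C f g) = tsub C (tsub C A f) g) /\
  (forall D G f A a, isOb C D -> isOb C G -> isMor C f D G -> isTy C G A ->
     isTm C G A a -> isTm C D (tsub C A f) (msub C a f)) /\
  (forall G A a, isOb C G -> isTy C G A -> isTm C G A a ->
     msub C a (idm C G) = a) /\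
  (forall E D G f g A a, isOb C E -> isOb C D -> isOb C G ->
     isMor C f D G -> isMor C g E D -> isTy C G A -> isTm C G A a ->
     msub C a (comp C f g) = msub C (msub C a f) g) /\
  (forall G A, isOb C G -> isTy C G A ->
     isOb C (ext C G A) /\ isMor C (pr C G A) (ext C G A) G) /\
  (forall G A, isOb C G -> isTy C G A ->
     isTm C (ext C G A) (tsub C A (pr C G A)) (vr C G A)) /\
  (forall D G A f a, isOb C D -> isOb C G -> isTy C G A -> isMor C f D G ->
     isTm C D (tsub C A f) a ->
     isMor C (pair C G A f a) D (ext C G A) /\
     comp C (pr C G A) (pair C G A f a) = f /\
     msub C (vr C G A) (pair C G A f a) = a) /\
  (forall D G A h, isOb C D -> isOb C G -> isTy C G A ->
     isMor C h D (ext C G A) ->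
     pair C G A (comp C (pr C G A) h) (msub C (vr C G A) h) = h) /\
  (forall E D G A f a g, isOb C E -> isOb C D -> isOb C G -> isTy C G A ->
     isMor C f D G -> isTm C D (tsub C A f) a -> isMor C g E D ->
     comp C (pair C G A f a) g = pair C G A (comp C f g) (msub C a g)).

Fixpoint tele (C : cwf_data) (G0 : Ob C) (As : list (TyE C)) : Prop :=
  match As with
  | [] => True
  | A :: As' => isTy C G0 A /\ tele C (ext C G0 A) As'
  end.

Fixpoint tele_end (C : cwf_data) (G0 : Ob C) (As : list (TyE C)) : Ob C :=
  match As with
  | [] => G0
  | A :: As' => tele_end C (ext C G0 A) As'
  end.

Definition is_contextual_cwf (C : cwf_data) : Prop :=
  is_cwf C /\
  forall G, isOb C G ->
    exists! As, tele C (top C) As /\ tele_end C (top C) As = G.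

Section Syntax.
Context (VS : VarSystem) (F T : Type).
Local Notation V := (var VS).

Inductive preel : Type :=
| PVar (x : V)
| PApp (f : F) (ts : list preel).

Inductive pretype : Type :=
| PTy (S : T) (ts : list preel).

Fixpoint vars_el (t : preel) : list V :=
  match t with
  | PVar x => [x]
  | PApp _ ts => flat_map vars_el ts
  end.

Definition vars_ty (A : pretype) : list V :=
  match A with PTy _ ts => flat_map vars_el ts end.

Fixpoint subst_el (s : V -> preel) (t : preel) : preel :=
  match t with
  | PVar x => s x
  | PApp f ts => PApp f (map (subst_el s) ts)
  end.

Definition subst_ty (s : V -> preel) (A : pretype) : pretype :=
  match A with PTy S0 ts => PTy S0 (map (subst_el s) ts) end.

Fixpoint lookup (xs : list V) (as_ : list preel) (x : V) : option preel :=
  match xs, as_ with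
  | x' :: xs', a :: as' =>
      if var_eq_dec VS x x' then Some a else lookup xs' as' x
  | _, _ => None
  end.

Definition sub (xs : list V) (as_ : list preel) : V -> preel :=
  fun x => match lookup xs as_ x with Some a => a | None => PVar x end.

Inductive ctx : Type :=
| CEmpty
| CExt (G : ctx) (x : V) (A : pretype).

Fixpoint ctx_list (G : ctx) : list (V * pretype) :=
  match G with
  | CEmpty => []
  | CExt G' x A => ctx_list G' ++ [(x, A)]
  end.

Definition OV (G : ctx) : list V := map fst (ctx_list G).

Definition fresh (G : ctx) : V := fr VS (OV G).

Fixpoint is_precontext (G : ctx) : Prop :=
  match G with
  | CEmpty => True
  | CExt G' x A =>
      is_precontext G' /\ phi VS (OV G') x /\ incl (vars_ty A) (OV G')
  end.

Definition subst_el_ctx (as_ : list preel) (G : ctx) (t : preel) : preel :=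
  subst_el (sub (OV G) as_) t.
Definition subst_ty_ctx (as_ : list preel) (G : ctx) (A : pretype) : pretype :=
  subst_ty (sub (OV G) as_) A.

Fixpoint TV (G : ctx) : V -> Prop :=
  match G with
  | CEmpty => fun _ => False
  | CExt G' x A => fun y => (TV G' y /\ ~ In y (vars_ty A)) \/ y = x
  end.

(* determining sequences (1-based indices as in the paper) *)
Definition determining (G : ctx) (is_ : list nat) : Prop :=
  StronglySorted lt is_ /\
  (forall i, In i is_ -> 1 <= i <= length (OV G)) /\
  (forall y, TV G y -> exists i, In i is_ /\ nth_error (OV G) (i - 1) = Some y).

Definition select (as_ : list preel) (is_ : list nat) : list preel :=
  flat_map (fun i => match nth_error as_ (i - 1) with
                     | Some a => [a] | None => [] end) is_.

Record presig := {
  sig_ty : ctx -> T -> list nat -> Prop;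
  sig_fn : ctx -> F -> list nat -> pretype -> Prop
}.

Definition is_presignature (Sg : presig) : Prop :=
  (forall G S is_, sig_ty Sg G S is_ -> is_precontext G /\ determining G is_) /\
  (forall G f is_ U, sig_fn Sg G f is_ U ->
     is_precontext G /\ determining G is_ /\ incl (vars_ty U) (OV G)) /\
  (forall G S is_ G' is', sig_ty Sg G S is_ -> sig_ty Sg G' S is' ->
     G = G' /\ is_ = is') /\
  (forall G f is_ U G' is' U', sig_fn Sg G f is_ U -> sig_fn Sg G' f is' U' ->
     G = G' /\ is_ = is' /\ U = U').

Inductive judg : Type :=
| JCtx (G : ctx)
| JTy (G : ctx) (A : pretype)
| JTm (G : ctx) (a : preel) (A : pretype).

Definition ctxmap (Dj : judg -> Prop) (D G : ctx) (as_ : list preel) : Prop :=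
  Dj (JCtx D) /\ Dj (JCtx G) /\ length as_ = length (ctx_list G) /\
  forall k x A a, nth_error (ctx_list G) k = Some (x, A) ->
    nth_error as_ k = Some a ->
    Dj (JTm D a (subst_ty (sub (firstn k (OV G)) (firstn k as_)) A)).

Inductive deriv (Sg : presig) : judg -> Prop :=
| R1 : deriv Sg (JCtx CEmpty)
| R2 : forall G A x, deriv Sg (JCtx G) -> deriv Sg (JTy G A) ->
       phi VS (OV G) x -> deriv Sg (JCtx (CExt G x A))
| R3 : forall G x A, deriv Sg (JCtx G) -> In (x, A) (ctx_list G) ->
       deriv Sg (JTm G (PVar x) A)
| R4 : forall G S is_ D as_, sig_ty Sg G S is_ -> ctxmap (deriv Sg) D G as_ ->
       deriv Sg (JTy D (PTy S (select as_ is_)))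
| R5 : forall G f is_ U D as_, sig_fn Sg G f is_ U -> ctxmap (deriv Sg) D G as_ ->
       deriv Sg (JTy D (subst_ty_ctx as_ G U)) ->
       deriv Sg (JTm D (PApp f (select as_ is_)) (subst_ty_ctx as_ G U)).

Definition is_signature (Sg : presig) : Prop :=
  is_presignature Sg /\
  (forall G S is_, sig_ty Sg G S is_ -> deriv Sg (JCtx G)) /\
  (forall G f is_ U, sig_fn Sg G f is_ U -> deriv Sg (JTy G U)).

Definition FS_isOb (Sg : presig) (G : ctx) : Prop :=
  is_precontext G /\ deriv Sg (JCtx G).

Definition FS_isMor (Sg : presig) (m : ctx * ctx * list preel) (D G : ctx) : Prop :=
  FS_isOb Sg D /\ FS_isOb Sg G /\
  exists as_, m = (D, G, as_) /\ ctxmap (deriv Sg) D G as_.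

Definition FS_comp (g f : ctx * ctx * list preel) : ctx * ctx * list preel :=
  match g, f with
  | (G, Th, ts), (D, _, ss) => (D, Th, map (subst_el_ctx ss G) ts)
  end.

Definition FS_id (G : ctx) : ctx * ctx * list preel :=
  (G, G, map PVar (OV G)).

Definition FS_isTy (Sg : presig) (G : ctx) (T' : ctx * pretype) : Prop :=
  exists A, T' = (G, A) /\ deriv Sg (JTy G A).

Definition FS_tsub (T' : ctx * pretype) (f : ctx * ctx * list preel) : ctx * pretype :=
  match T', f with
  | (G, A), (D, _, as_) => (D, subst_ty_ctx as_ G A)
  end.

Definition FS_isTm (Sg : presig) (G : ctx) (T' : ctx * pretype)
  (t : (ctx * pretype) * preel) : Prop :=
  exists A a, T' = (G, A) /\ t = ((G, A), a) /\ deriv Sg (JTm G a A).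

Definition FS_msub (t : (ctx * pretype) * preel) (f : ctx * ctx * list preel)
  : (ctx * pretype) * preel :=
  match t, f with
  | ((G, A), a), (D, _, as_) => ((D, subst_ty_ctx as_ G A), subst_el_ctx as_ G a)
  end.

Definition FS_ext (_ : ctx) (T' : ctx * pretype) : ctx :=
  match T' with (G, S0) => CExt G (fresh G) S0 end.

Definition FS_pr (G0 : ctx) (T' : ctx * pretype) : ctx * ctx * list preel :=
  match T' with (G, S0) => (FS_ext G0 T', G, map PVar (OV G)) end.

Definition FS_vr (G0 : ctx) (T' : ctx * pretype) : (ctx * pretype) * preel :=
  match T' with (G, S0) => ((FS_ext G0 T', S0), PVar (fresh G)) end.

Definition FS_pair (G0 : ctx) (T' : ctx * pretype) (f : ctx * ctx * list preel)
  (b : (ctx * pretype) * preel) : ctx * ctx * list preel :=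
  match f, b with
  | (D, _, ss), (_, bb) => (D, FS_ext G0 T', ss ++ [bb])
  end.

Definition F_Sigma (Sg : presig) : cwf_data := {|
  Ob := ctx;
  Mor := ctx * ctx * list preel;
  isOb := FS_isOb Sg;
  isMor := FS_isMor Sg;
  comp := FS_comp;
  idm := FS_id;
  top := CEmpty;
  TyE := ctx * pretype;
  isTy := FS_isTy Sg;
  tsub := FS_tsub;
  TmE := (ctx * pretype) * preel;
  isTm := FS_isTm Sg;
  msub := FS_msub;
  ext := FS_ext;
  pr := FS_pr;
  vr := FS_vr;
  pair := FS_pair
|}.

End Syntax.

From Stdlib Require Import List Arith Sorted Lia.
Import ListNotations.
Set Implicit Arguments. Unset Strict Implicit.

(* Morphisms of F_Sigma are context maps and composition is simultaneous substitution, so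
   the category laws and the functoriality of Ty and Tm reduce to two facts about
   substitution: substituting after a substitution [ā/Γ] is substituting the composite
   [b̄∘ā/Γ] (for expressions scoped in Γ), and [x̄/Γ] is the identity.  That these
   operations stay inside F_Sigma is the substitution lemma: derivable type and term
   judgements are stable under context maps, by induction on derivations, nested through
   the context-map premises of R4 and R5.  Comprehension is extension by fresh(Γ), and
   pairing works because fresh(Γ) does not occur in Γ.  Under the de Bruijn property every
   extension Γ, x : A of a derivable context has x = fresh(Γ), so a context is the iterated
   comprehension of its own types, and of no other sequence since comprehension only
   appends declarations. *)

Section Syntax.
Context (VS : VarSystem) (F T : Type).
Local Notation V := (var VS).
Local Notation preel := (preel VS F).
Local Notation pretype := (pretype VS F T).
Local Notation ctx := (ctx VS F T).

Fixpoint preel_nested_ind (P : preel -> Prop) (HV : forall x, P (PVar VS F x))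
  (HA : forall f ts, Forall P ts -> P (PApp f ts)) (t : preel) : P t :=
  match t with
  | PVar _ _ x => HV x
  | PApp f ts => HA f ts ((fix go l := match l return Forall P l with
      | [] => Forall_nil _
      | t :: l => Forall_cons _ (preel_nested_ind HV HA t) (go l) end) ts)
  end.

Lemma subst_el_comp (s1 s2 : V -> preel) t :
  subst_el s2 (subst_el s1 t) = subst_el (fun x => subst_el s2 (s1 x)) t.
Proof.
  induction t using preel_nested_ind; simpl; auto.
  f_equal. rewrite map_map. induction H; simpl; f_equal; auto.
Qed.

Lemma subst_el_ext (s s' : V -> preel) t :
  (forall x, In x (vars_el t) -> s x = s' x) -> subst_el s t = subst_el s' t.
Proof.
  induction t using preel_nested_ind; simpl; intros Hs; auto.
  f_equal. induction H; simpl in *; f_equal; auto using in_or_app.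
Qed.

Lemma subst_el_id t : subst_el (PVar VS F) t = t.
Proof.
  induction t using preel_nested_ind; simpl; auto.
  f_equal. induction H; simpl; f_equal; auto.
Qed.

Lemma subst_ty_comp (s1 s2 : V -> preel) (A : pretype) :
  subst_ty s2 (subst_ty s1 A) = subst_ty (fun x => subst_el s2 (s1 x)) A.
Proof.
  destruct A; simpl. f_equal. rewrite map_map. apply map_ext. intros; apply subst_el_comp.
Qed.

Lemma subst_ty_ext (s s' : V -> preel) (A : pretype) :
  (forall x, In x (vars_ty A) -> s x = s' x) -> subst_ty s A = subst_ty s' A.
Proof.
  destruct A; simpl; intros H. f_equal. apply map_ext_in. intros a Ha.
  apply subst_el_ext. intros; apply H, in_flat_map. eauto.
Qed.

Lemma subst_ty_id (A : pretype) : subst_ty (PVar VS F) A = A.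
Proof. destruct A; simpl; f_equal. induction ts; simpl; f_equal; auto using subst_el_id. Qed.

Lemma lookup_map (xs : list V) (as_ : list preel) (f : preel -> preel) x :
  lookup xs (map f as_) x = option_map f (lookup xs as_ x).
Proof.
  revert as_; induction xs; destruct as_; simpl; auto.
  destruct (var_eq_dec VS x a); auto.
Qed.

Lemma lookup_some (xs : list V) (as_ : list preel) x :
  In x xs -> length xs <= length as_ -> exists a, lookup xs as_ x = Some a.
Proof.
  revert as_; induction xs; destruct as_; simpl; intros; try lia; try tauto.
  destruct (var_eq_dec VS x a); eauto.
  destruct H; [congruence|]. apply IHxs; auto; lia.
Qed.

Lemma lookup_none (xs : list V) (as_ : list preel) x :
  ~ In x xs -> lookup xs as_ x = None.
Proof.
  revert as_; induction xs; destruct as_; simpl; intros; auto.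
  destruct (var_eq_dec VS x a); subst; auto. tauto.
Qed.

Lemma lookup_app (xs ys : list V) (as_ bs : list preel) x :
  length xs = length as_ ->
  lookup (xs ++ ys) (as_ ++ bs) x =
  match lookup xs as_ x with Some a => Some a | None => lookup ys bs x end.
Proof.
  revert as_; induction xs; destruct as_; simpl; intros; try discriminate; auto.
  destruct (var_eq_dec VS x a); auto.
Qed.

Lemma sub_id (xs : list V) x : sub xs (map (PVar VS F) xs) x = PVar VS F x.
Proof.
  unfold sub. induction xs; simpl; auto.
  destruct (var_eq_dec VS x a); subst; auto.
Qed.

Lemma subst_el_sub_id (xs : list V) t : subst_el (sub xs (map (PVar VS F) xs)) t = t.
Proof. rewrite <- (subst_el_id t) at 2. apply subst_el_ext. intros; apply sub_id. Qed.

Lemma subst_ty_sub_id (xs : list V) (A : pretype) : subst_ty (sub xs (map (PVar VS F) xs)) A = A.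
Proof. rewrite <- (subst_ty_id A) at 2. apply subst_ty_ext. intros; apply sub_id. Qed.

Lemma sub_firstn k (xs : list V) (as_ : list preel) y :
  In y (firstn k xs) -> sub (firstn k xs) (firstn k as_) y = sub xs as_ y.
Proof.
  unfold sub. revert xs as_; induction k; intros xs as_ H; simpl in *; [tauto|].
  destruct xs; simpl in *; [tauto|]. destruct as_; simpl; auto.
  destruct (var_eq_dec VS y v); auto. apply IHk. destruct H; congruence.
Qed.

Lemma lookup_nth (xs : list V) (as_ : list preel) k x :
  NoDup xs -> nth_error xs k = Some x -> lookup xs as_ x = nth_error as_ k.
Proof.
  intros Hnd; revert as_ k; induction Hnd as [|y xs Hy Hnd IH]; intros as_ k Hx;
    [destruct k; discriminate|].
  destruct k as [|k]; simpl in Hx.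
  - injection Hx as ->. destruct as_; simpl; auto.
    destruct (var_eq_dec VS x x); congruence.
  - destruct as_ as [|a as_]; simpl.
    + destruct k; auto.
    + destruct (var_eq_dec VS x y) as [<-|]; auto.
      exfalso. apply Hy. eapply nth_error_In; eauto.
Qed.

Lemma sub_nth (xs : list V) (as_ : list preel) k x a :
  NoDup xs -> nth_error xs k = Some x -> nth_error as_ k = Some a -> sub xs as_ x = a.
Proof. intros Hnd Hx Ha. unfold sub. rewrite (lookup_nth as_ Hnd Hx), Ha. reflexivity. Qed.

Lemma map_sub_self (xs : list V) (ss : list preel) :
  NoDup xs -> length xs = length ss -> map (sub xs ss) xs = ss.
Proof.
  intros Hnd; revert ss; induction Hnd as [|x xs Hx Hnd IH]; destruct ss as [|a ss];
    simpl; intros Hl; try discriminate; auto.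
  unfold sub at 1; simpl. destruct (var_eq_dec VS x x); [|congruence]. f_equal.
  rewrite <- (IH ss) at 2 by auto. apply map_ext_in. intros y Hy.
  unfold sub; simpl. destruct (var_eq_dec VS y x); subst; tauto.
Qed.

Lemma sub_app_l (xs ys : list V) (ss bs : list preel) x :
  length xs = length ss -> In x xs -> sub (xs ++ ys) (ss ++ bs) x = sub xs ss x.
Proof.
  intros Hl Hi. unfold sub. rewrite lookup_app by auto.
  destruct (@lookup_some xs ss x Hi ltac:(lia)) as [a ->]. reflexivity.
Qed.

Lemma sub_snoc_last (xs : list V) (ss : list preel) y b :
  length xs = length ss -> ~ In y xs -> sub (xs ++ [y]) (ss ++ [b]) y = b.
Proof.
  intros Hl Hi. unfold sub. rewrite lookup_app, lookup_none by auto.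
  simpl. destruct (var_eq_dec VS y y); congruence.
Qed.

Lemma map_sub_snoc (xs : list V) (ss : list preel) y b :
  NoDup xs -> length xs = length ss ->
  map (sub (xs ++ [y]) (ss ++ [b])) xs = ss.
Proof.
  intros Hnd Hl. rewrite <- (map_sub_self Hnd Hl) at 2.
  apply map_ext_in. intros; apply sub_app_l; auto.
Qed.

Lemma subst_el_sub_map (xs : list V) (as_ : list preel) s t :
  incl (vars_el t) xs -> length xs <= length as_ ->
  subst_el s (subst_el (sub xs as_) t) = subst_el (sub xs (map (subst_el s) as_)) t.
Proof.
  intros Hi Hl. rewrite subst_el_comp. apply subst_el_ext. intros x Hx.
  destruct (@lookup_some xs as_ x (Hi x Hx) Hl) as [a Ha].
  unfold sub. rewrite lookup_map, Ha. reflexivity.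
Qed.

Lemma subst_ty_sub_map (xs : list V) (as_ : list preel) s (A : pretype) :
  incl (vars_ty A) xs -> length xs <= length as_ ->
  subst_ty s (subst_ty (sub xs as_) A) = subst_ty (sub xs (map (subst_el s) as_)) A.
Proof.
  intros Hi Hl. rewrite subst_ty_comp. apply subst_ty_ext. intros x Hx.
  destruct (@lookup_some xs as_ x (Hi x Hx) Hl) as [a Ha].
  unfold sub. rewrite lookup_map, Ha. reflexivity.
Qed.

Lemma select_in (as_ : list preel) is_ a : In a (select as_ is_) -> In a as_.
Proof.
  unfold select. intros H. apply in_flat_map in H as [i [_ Hi]].
  destruct (nth_error as_ (i - 1)) eqn:E; simpl in Hi; [|tauto].
  destruct Hi as [<-|[]]. eapply nth_error_In; eauto.
Qed.

Lemma select_map (as_ : list preel) is_ (f : preel -> preel) :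
  select (map f as_) is_ = map f (select as_ is_).
Proof.
  unfold select. induction is_; simpl; auto. rewrite map_app, IHis_, nth_error_map.
  destruct (nth_error as_ (a - 1)); reflexivity.
Qed.

Lemma firstn_app_le {X : Type} k (l1 l2 : list X) :
  k <= length l1 -> firstn k (l1 ++ l2) = firstn k l1.
Proof.
  intros. rewrite firstn_app. replace (k - length l1) with 0 by lia. apply app_nil_r.
Qed.

Lemma OV_ext (G : ctx) x A : OV (CExt G x A) = OV G ++ [x].
Proof. unfold OV; simpl. rewrite map_app. reflexivity. Qed.

Lemma length_OV (G : ctx) : length (OV G) = length (ctx_list G).
Proof. apply length_map. Qed.

Lemma precontext_NoDup (G : ctx) : is_precontext G -> NoDup (OV G).
Proof.
  induction G as [|G IH x A]; simpl; intros H; [constructor|].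
  destruct H as [HG [Hx _]]. rewrite OV_ext.
  apply NoDup_app; auto using NoDup_cons, NoDup_nil.
  intros y Hy [<-|[]]. eapply phi_avoid; eauto.
Qed.

Lemma precontext_nth (G : ctx) k x A : is_precontext G ->
  nth_error (ctx_list G) k = Some (x, A) ->
  incl (vars_ty A) (firstn k (OV G)) /\ nth_error (OV G) k = Some x.
Proof.
  intros HG Hk. split.
  2:{ unfold OV. rewrite nth_error_map, Hk. reflexivity. }
  revert k Hk; induction G as [|G IH y B]; simpl; intros k Hk; [destruct k; discriminate|].
  destruct HG as [HG [_ HB]]. rewrite OV_ext.
  destruct (Nat.lt_ge_cases k (length (ctx_list G))).
  - rewrite nth_error_app1 in Hk by auto. rewrite firstn_app_le by (rewrite length_OV; lia).
    auto.
  - rewrite nth_error_app2 in Hk by auto.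
    destruct (k - length (ctx_list G)) eqn:E; simpl in Hk; [|destruct n; discriminate].
    injection Hk as -> ->. rewrite firstn_app_le, firstn_all2 by (rewrite length_OV; lia).
    auto.
Qed.

Lemma precontext_in (G : ctx) x A : is_precontext G -> In (x, A) (ctx_list G) ->
  incl (vars_ty A) (OV G) /\ In x (OV G).
Proof.
  intros HG Hi. destruct (In_nth_error _ _ Hi) as [k Hk].
  destruct (precontext_nth HG Hk) as [HA Hx]. split.
  - intros y Hy. apply HA in Hy. rewrite <- (firstn_skipn k (OV G)). apply in_or_app; auto.
  - eapply nth_error_In; eauto.
Qed.

End Syntax.
Section Derivations.
Context (VS : VarSystem) (F T : Type) (Sg : presig VS F T).
Local Notation preel := (preel VS F).
Local Notation pretype := (pretype VS F T).
Local Notation ctx := (ctx VS F T).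
Local Notation judg := (judg VS F T).
Local Notation deriv := (deriv Sg).

Lemma ctxmap_length (Dj : judg -> Prop) (D G : ctx) as_ :
  ctxmap Dj D G as_ -> length as_ = length (OV G).
Proof. intros [_ [_ [cl _]]]. rewrite length_OV; auto. Qed.

Section NestedInduction.
Variable P : judg -> Prop.
Hypothesis P_R1 : P (JCtx (CEmpty VS F T)).
Hypothesis P_R2 : forall (G : ctx) A x, deriv (JCtx G) -> P (JCtx G) ->
  deriv (JTy G A) -> P (JTy G A) -> phi VS (OV G) x -> P (JCtx (CExt G x A)).
Hypothesis P_R3 : forall (G : ctx) x A, deriv (JCtx G) -> P (JCtx G) ->
  In (x, A) (ctx_list G) -> P (JTm G (PVar VS F x) A).
Hypothesis P_R4 : forall (G : ctx) S is_ D as_, sig_ty Sg G S is_ ->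
  ctxmap (fun j => deriv j /\ P j) D G as_ -> P (JTy D (PTy S (select as_ is_))).
Hypothesis P_R5 : forall (G : ctx) f is_ U D as_, sig_fn Sg G f is_ U ->
  ctxmap (fun j => deriv j /\ P j) D G as_ ->
  deriv (JTy D (subst_ty_ctx as_ G U)) -> P (JTy D (subst_ty_ctx as_ G U)) ->
  P (JTm D (PApp f (select as_ is_)) (subst_ty_ctx as_ G U)).

(* The premises of R4 and R5 hide under [ctxmap], so the induction hypothesis has to
   be pushed through it by hand. *)
Fixpoint deriv_nested_ind (j : judg) (d : deriv j) {struct d} : P j.
Proof.
  destruct d as [|G A x d1 d2 h|G x A d1 h|G S is_ D as_ hs cm|G f is_ U D as_ hs cm d3].
  - exact P_R1.
  - exact (P_R2 d1 (deriv_nested_ind _ d1) d2 (deriv_nested_ind _ d2) h).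
  - exact (P_R3 d1 (deriv_nested_ind _ d1) h).
  - apply (P_R4 hs). destruct cm as [c1 [c2 [cl cf]]].
    refine (conj (conj c1 (deriv_nested_ind _ c1))
              (conj (conj c2 (deriv_nested_ind _ c2)) (conj cl _))).
    intros k x A a e1 e2.
    exact (conj (cf k x A a e1 e2) (deriv_nested_ind _ (cf k x A a e1 e2))).
  - apply (P_R5 hs); [|exact d3|exact (deriv_nested_ind _ d3)].
    destruct cm as [c1 [c2 [cl cf]]].
    refine (conj (conj c1 (deriv_nested_ind _ c1))
              (conj (conj c2 (deriv_nested_ind _ c2)) (conj cl _))).
    intros k x A a e1 e2.
    exact (conj (cf k x A a e1 e2) (deriv_nested_ind _ (cf k x A a e1 e2))).
Defined.
End NestedInduction.

Definition well_scoped (j : judg) : Prop :=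
  match j with
  | JCtx G => is_precontext G
  | JTy G A => is_precontext G /\ incl (vars_ty A) (OV G)
  | JTm G a A => is_precontext G /\ incl (vars_el a) (OV G) /\ incl (vars_ty A) (OV G)
  end.

Lemma ctxmap_scoped (D G : ctx) as_ :
  ctxmap well_scoped D G as_ -> forall a, In a as_ -> incl (vars_el a) (OV D).
Proof.
  intros [_ [_ [cl cf]]] a Ha. destruct (In_nth_error _ _ Ha) as [k Hk].
  assert (k < length (ctx_list G)) by (rewrite <- cl; apply nth_error_Some; congruence).
  destruct (nth_error (ctx_list G) k) as [[x A]|] eqn:E; [|apply nth_error_None in E; lia].
  apply (cf k x A a E Hk).
Qed.

Lemma ctxmap_mono (P Q : judg -> Prop) (D G : ctx) as_ :
  (forall j, P j -> Q j) -> ctxmap P D G as_ -> ctxmap Q D G as_.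
Proof. intros H [c1 [c2 [cl cf]]]. repeat split; auto. intros; apply H; eauto. Qed.

Lemma select_scoped (D G : ctx) as_ is_ :
  ctxmap (fun j => deriv j /\ well_scoped j) D G as_ ->
  incl (flat_map (vars_el (F:=F)) (select as_ is_)) (OV D).
Proof.
  intros cm y Hy. apply in_flat_map in Hy as [a [Ha Hy]].
  eapply ctxmap_scoped; [|eapply select_in; eauto|exact Hy].
  eapply ctxmap_mono; [|exact cm]. intros j [_ Hj]; exact Hj.
Qed.

Lemma deriv_well_scoped j : deriv j -> well_scoped j.
Proof.
  revert j; apply deriv_nested_ind; simpl.
  - auto.
  - tauto.
  - intros G x A _ HG Hin. destruct (precontext_in HG Hin) as [HA Hx].
    repeat split; auto. intros y [<-|[]]; auto.
  - intros G S is_ D as_ _ cm. split; [apply cm|]. eapply select_scoped; eauto.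
  - intros G f is_ U D as_ _ cm _ [HD HU]. repeat split; auto.
    eapply select_scoped; eauto.
Qed.

Lemma ctxmap_args_scoped (D G : ctx) as_ :
  ctxmap deriv D G as_ -> forall a, In a as_ -> incl (vars_el a) (OV D).
Proof.
  intros cm. apply (ctxmap_scoped (G:=G)). eapply ctxmap_mono; [|exact cm].
  exact deriv_well_scoped.
Qed.

Lemma deriv_isOb (G : ctx) : deriv (JCtx G) -> FS_isOb Sg G.
Proof. intros d. split; auto. exact (deriv_well_scoped d). Qed.

Lemma ctxmap_isMor (D G : ctx) as_ : ctxmap deriv D G as_ -> FS_isMor Sg (D, G, as_) D G.
Proof.
  intros cm. split; [|split]; [apply deriv_isOb, cm .. | eauto].
Qed.

(* Without this, variables of U outside Γ would survive U[ā/Γ], and substitutions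
   would not compose. *)
Hypothesis sig_fn_scoped :
  forall G f is_ U, sig_fn Sg G f is_ U -> incl (vars_ty U) (OV G).

Definition stable_under_ctxmaps (j : judg) : Prop :=
  match j with
  | JCtx _ => True
  | JTy D A => forall (Th : ctx) s, ctxmap deriv Th D s ->
      deriv (JTy Th (subst_ty_ctx s D A))
  | JTm D a A => forall (Th : ctx) s, ctxmap deriv Th D s ->
      deriv (JTm Th (subst_el_ctx s D a) (subst_ty_ctx s D A))
  end.

Lemma ctxmap_subst (Dj : judg -> Prop) (D G Th : ctx) as_ s :
  (forall j, Dj j -> deriv j) ->
  (forall a A, Dj (JTm D a A) ->
     deriv (JTm Th (subst_el_ctx s D a) (subst_ty_ctx s D A))) ->
  ctxmap Dj D G as_ -> ctxmap deriv Th D s ->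
  ctxmap deriv Th G (map (subst_el_ctx s D) as_).
Proof.
  intros HG Htm [c1 [c2 [cl cf]]] [cs _].
  assert (pcG : is_precontext G) by exact (deriv_well_scoped (HG _ c2)).
  repeat split; auto; [rewrite length_map; auto|].
  intros k x A a' E1 E2. rewrite nth_error_map in E2.
  destruct (nth_error as_ k) as [a|] eqn:E3; [injection E2 as <-|discriminate].
  specialize (Htm _ _ (cf k x A a E1 E3)). unfold subst_ty_ctx in Htm.
  rewrite subst_ty_sub_map, <- firstn_map in Htm; [exact Htm|apply (precontext_nth pcG E1)|].
  rewrite !length_firstn, length_OV, cl. lia.
Qed.

Lemma deriv_stable_under_ctxmaps j : deriv j -> stable_under_ctxmaps j.
Proof.
  revert j; apply deriv_nested_ind; simpl; auto.
  - intros G x A dG _ Hin Th s [_ [_ [sl sf]]].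
    pose proof (deriv_well_scoped dG) as pcG; simpl in pcG.
    destruct (In_nth_error _ _ Hin) as [k Hk].
    destruct (precontext_nth pcG Hk) as [HA Hx].
    destruct (nth_error s k) as [a|] eqn:Ea.
    2:{ apply nth_error_None in Ea. rewrite sl, <- nth_error_None in Ea. congruence. }
    unfold subst_el_ctx; simpl. rewrite (sub_nth (precontext_NoDup pcG) Hx Ea).
    specialize (sf k x A a Hk Ea). unfold subst_ty_ctx.
    erewrite subst_ty_ext; [exact sf|]. intros y Hy. symmetry. apply sub_firstn; auto.
  - intros G S0 is_ D as_ HS cm Th s cs. simpl. rewrite <- select_map.
    apply (R4 S0 is_ (G:=G)); auto.
    apply (ctxmap_subst (Dj := fun j => deriv j /\ stable_under_ctxmaps j));
      [intros j [dj _]; exact dj|intros a A [_ Ha]; apply Ha, cs|exact cm|exact cs].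
  - intros G f is_ U D as_ Hf cm _ HU Th s cs.
    assert (Hcomp : subst_ty_ctx s D (subst_ty_ctx as_ G U)
                    = subst_ty_ctx (map (subst_el_ctx s D) as_) G U).
    { apply subst_ty_sub_map; [eauto|]. rewrite (ctxmap_length cm); auto. }
    unfold subst_el_ctx at 1; simpl. rewrite <- select_map. fold (subst_el_ctx s D).
    rewrite Hcomp. apply (R5 (G:=G) f is_ U); auto.
    + apply (ctxmap_subst (Dj := fun j => deriv j /\ stable_under_ctxmaps j));
        [intros j [dj _]; exact dj|intros a A [_ Ha]; apply Ha, cs|exact cm|exact cs].
    + rewrite <- Hcomp. auto.
Qed.

Lemma deriv_ty_subst (D Th : ctx) A s :
  deriv (JTy D A) -> ctxmap deriv Th D s -> deriv (JTy Th (subst_ty_ctx s D A)).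
Proof. intros d. exact (deriv_stable_under_ctxmaps d Th s). Qed.

Lemma deriv_tm_subst (D Th : ctx) a A s :
  deriv (JTm D a A) -> ctxmap deriv Th D s ->
  deriv (JTm Th (subst_el_ctx s D a) (subst_ty_ctx s D A)).
Proof. intros d. exact (deriv_stable_under_ctxmaps d Th s). Qed.

Lemma ctxmap_comp (D G Th : ctx) as_ s :
  ctxmap deriv D G as_ -> ctxmap deriv Th D s ->
  ctxmap deriv Th G (map (subst_el_ctx s D) as_).
Proof.
  intros cm cs. apply (ctxmap_subst (Dj := deriv)); auto.
  intros a A d. apply deriv_tm_subst; auto.
Qed.

Lemma ctxmap_projection (G G' : ctx) :
  deriv (JCtx G') -> deriv (JCtx G) ->
  (forall p, In p (ctx_list G) -> In p (ctx_list G')) ->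
  ctxmap deriv G' G (map (PVar VS F) (OV G)).
Proof.
  intros dG' dG Hincl. repeat split; auto; [rewrite length_map, length_OV; auto|].
  intros k x A a E1 E2. rewrite firstn_map, subst_ty_sub_id.
  unfold OV in E2. rewrite nth_error_map, nth_error_map, E1 in E2. injection E2 as <-.
  apply R3; auto. apply Hincl. eapply nth_error_In; eauto.
Qed.

Lemma ctxmap_snoc (D G : ctx) x A ss b :
  ctxmap deriv D G ss -> deriv (JCtx (CExt G x A)) ->
  deriv (JTm D b (subst_ty_ctx ss G A)) ->
  ctxmap deriv D (CExt G x A) (ss ++ [b]).
Proof.
  intros [cD [_ [cl cf]]] dGx db.
  repeat split; auto; [simpl; rewrite !length_app, cl; reflexivity|].
  intros k y B a E1 E2. simpl in E1. rewrite OV_ext.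
  destruct (Nat.lt_ge_cases k (length (ctx_list G))).
  - rewrite nth_error_app1 in E1 by auto. rewrite nth_error_app1 in E2 by lia.
    rewrite !firstn_app_le by (rewrite ?length_OV; lia). exact (cf k y B a E1 E2).
  - rewrite nth_error_app2 in E1 by auto. rewrite nth_error_app2 in E2 by lia.
    destruct (k - length (ctx_list G)) as [|n] eqn:Ek; [|destruct n; discriminate].
    rewrite cl, Ek in E2. injection E1 as <- <-. injection E2 as <-.
    assert (k = length (ctx_list G)) as -> by lia.
    rewrite !firstn_app_le, !firstn_all2 by (rewrite ?length_OV; lia).
    exact db.
Qed.

Lemma FS_comp_isMor (D G H : ctx) f g :
  FS_isMor Sg f D G -> FS_isMor Sg g G H -> FS_isMor Sg (FS_comp g f) D H.
Proof.
  intros [_ [_ [fs [-> cf]]]] [_ [_ [gs [-> cg]]]].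
  apply ctxmap_isMor, (ctxmap_comp cg cf).
Qed.

Lemma FS_id_isMor (G : ctx) : FS_isOb Sg G -> FS_isMor Sg (FS_id G) G G.
Proof. intros [_ dG]. apply ctxmap_isMor, ctxmap_projection; auto. Qed.

Lemma FS_comp_assoc (A B D E : ctx) f g h :
  FS_isMor Sg f A B -> FS_isMor Sg g B D -> FS_isMor Sg h D E ->
  FS_comp h (FS_comp g f) = FS_comp (FS_comp h g) f.
Proof.
  intros [_ [_ [fs [-> cf]]]] [_ [_ [gs [-> cg]]]] [_ [_ [hs [-> ch]]]]. simpl.
  f_equal. rewrite map_map. apply map_ext_in. intros t Ht. symmetry.
  apply subst_el_sub_map; [eapply ctxmap_args_scoped; eauto|].
  rewrite (ctxmap_length cg); auto.
Qed.

Lemma FS_comp_id_l (D G : ctx) f : FS_isMor Sg f D G -> FS_comp (FS_id G) f = f.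
Proof.
  intros [_ [[pcG _] [fs [-> cf]]]]. simpl. f_equal.
  rewrite map_map. apply map_sub_self; [apply precontext_NoDup; auto|].
  symmetry. apply (ctxmap_length cf).
Qed.

Lemma FS_comp_id_r (D G : ctx) f : FS_isMor Sg f D G -> FS_comp f (FS_id D) = f.
Proof.
  intros [_ [_ [fs [-> _]]]]. simpl. f_equal.
  rewrite <- (map_id fs) at 2. apply map_ext. apply subst_el_sub_id.
Qed.

Lemma FS_terminal (G : ctx) : FS_isOb Sg G ->
  exists f, FS_isMor Sg f G (CEmpty VS F T) /\
            forall g, FS_isMor Sg g G (CEmpty VS F T) -> g = f.
Proof.
  intros [_ dG]. exists (G, CEmpty VS F T, []). split.
  - apply ctxmap_isMor. repeat split; auto using R1. intros [|k]; discriminate.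
  - intros g [_ [_ [[|a gs] [-> [_ [_ [cl _]]]]]]]; [reflexivity|discriminate].
Qed.

Lemma FS_tsub_isTy (D G : ctx) f A :
  FS_isMor Sg f D G -> FS_isTy Sg G A -> FS_isTy Sg D (FS_tsub A f).
Proof.
  intros [_ [_ [fs [-> cf]]]] [A0 [-> dA]]. eexists; split; [reflexivity|].
  apply deriv_ty_subst; auto.
Qed.

Lemma FS_tsub_id (G : ctx) A : FS_isTy Sg G A -> FS_tsub A (FS_id G) = A.
Proof. intros [A0 [-> _]]. simpl. f_equal. apply subst_ty_sub_id. Qed.

Lemma FS_tsub_comp (E D G : ctx) f g A :
  FS_isMor Sg f D G -> FS_isMor Sg g E D -> FS_isTy Sg G A ->
  FS_tsub A (FS_comp f g) = FS_tsub (FS_tsub A f) g.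
Proof.
  intros [_ [_ [fs [-> cf]]]] [_ [_ [gs [-> _]]]] [A0 [-> dA]]. simpl. f_equal.
  symmetry. apply subst_ty_sub_map; [apply (deriv_well_scoped dA)|].
  rewrite (ctxmap_length cf); auto.
Qed.

Lemma FS_msub_isTm (D G : ctx) f A a :
  FS_isMor Sg f D G -> FS_isTm Sg G A a -> FS_isTm Sg D (FS_tsub A f) (FS_msub a f).
Proof.
  intros [_ [_ [fs [-> cf]]]] [A0 [a0 [-> [-> da]]]].
  do 2 eexists; split; [reflexivity|split; [reflexivity|]].
  apply deriv_tm_subst; auto.
Qed.

Lemma FS_msub_id (G : ctx) A a : FS_isTm Sg G A a -> FS_msub a (FS_id G) = a.
Proof.
  intros [A0 [a0 [-> [-> _]]]]. simpl.
  unfold subst_ty_ctx, subst_el_ctx. rewrite subst_ty_sub_id, subst_el_sub_id. reflexivity.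
Qed.

Lemma FS_msub_comp (E D G : ctx) f g A a :
  FS_isMor Sg f D G -> FS_isMor Sg g E D -> FS_isTm Sg G A a ->
  FS_msub a (FS_comp f g) = FS_msub (FS_msub a f) g.
Proof.
  intros [_ [_ [fs [-> cf]]]] [_ [_ [gs [-> _]]]] [A0 [a0 [-> [-> da]]]]. simpl.
  destruct (deriv_well_scoped da) as [_ [Ha HA]].
  assert (Hl : length (OV G) <= length fs) by (rewrite (ctxmap_length cf); auto).
  unfold subst_ty_ctx, subst_el_ctx.
  rewrite subst_ty_sub_map, subst_el_sub_map by auto. reflexivity.
Qed.

Lemma fresh_not_in_OV (G : ctx) : ~ In (fresh G) (OV G).
Proof. apply phi_avoid, fr_phi. Qed.

Lemma FS_ext_isOb (G : ctx) A :
  FS_isOb Sg G -> FS_isTy Sg G A -> FS_isOb Sg (FS_ext G A).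
Proof. intros [_ dG] [A0 [-> dA]]. apply deriv_isOb, R2; auto using fr_phi. Qed.

Lemma FS_pr_isMor (G : ctx) A :
  FS_isOb Sg G -> FS_isTy Sg G A -> FS_isMor Sg (FS_pr G A) (FS_ext G A) G.
Proof.
  intros HG HA. pose proof (FS_ext_isOb HG HA) as [_ dGA].
  destruct HG as [_ dG], HA as [A0 [-> _]].
  apply ctxmap_isMor, ctxmap_projection; auto.
  intros p Hp. apply in_or_app; auto.
Qed.

Lemma FS_vr_isTm (G : ctx) A :
  FS_isOb Sg G -> FS_isTy Sg G A ->
  FS_isTm Sg (FS_ext G A) (FS_tsub A (FS_pr G A)) (FS_vr G A).
Proof.
  intros HG HA. pose proof (FS_ext_isOb HG HA) as [_ dGA].
  destruct HA as [A0 [-> _]]. simpl.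
  unfold subst_ty_ctx. rewrite subst_ty_sub_id.
  do 2 eexists; split; [reflexivity|split; [reflexivity|]].
  apply R3; auto. apply in_or_app; simpl; auto.
Qed.

Section Pairing.
Variables (D G : ctx) (A0 : pretype) (ss : list preel) (b : preel).
Hypothesis dA : deriv (JTy G A0).
Hypothesis cf : ctxmap deriv D G ss.
Hypothesis db : deriv (JTm D b (subst_ty_ctx ss G A0)).

Let pcG : is_precontext G := deriv_well_scoped (proj1 (proj2 cf)).
Let len_ss : length (OV G) = length ss := eq_sym (ctxmap_length cf).

Lemma ctxmap_pair : ctxmap deriv D (CExt G (fresh G) A0) (ss ++ [b]).
Proof.
  apply ctxmap_snoc; auto. apply R2; auto using fr_phi. apply cf.
Qed.

Lemma pr_pair :
  map (subst_el_ctx (ss ++ [b]) (CExt G (fresh G) A0)) (map (PVar VS F) (OV G)) = ss.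
Proof.
  rewrite map_map. unfold subst_el_ctx; simpl. rewrite OV_ext.
  apply map_sub_snoc; auto using precontext_NoDup.
Qed.

Lemma vr_pair :
  subst_ty_ctx (ss ++ [b]) (CExt G (fresh G) A0) A0 = subst_ty_ctx ss G A0 /\
  subst_el_ctx (ss ++ [b]) (CExt G (fresh G) A0) (PVar VS F (fresh G)) = b.
Proof.
  unfold subst_ty_ctx, subst_el_ctx; simpl; rewrite OV_ext. split.
  - apply subst_ty_ext. intros x Hx. apply sub_app_l; auto.
    apply (deriv_well_scoped dA); auto.
  - apply sub_snoc_last; auto using fresh_not_in_OV.
Qed.
End Pairing.

Lemma FS_pair_spec (D G : ctx) A f a :
  FS_isTy Sg G A -> FS_isMor Sg f D G -> FS_isTm Sg D (FS_tsub A f) a ->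
  FS_isMor Sg (FS_pair G A f a) D (FS_ext G A) /\
  FS_comp (FS_pr G A) (FS_pair G A f a) = f /\
  FS_msub (FS_vr G A) (FS_pair G A f a) = a.
Proof.
  intros [A0 [-> dA]] [_ [_ [ss [-> cf]]]] [A1 [b [EA [-> db]]]].
  injection EA as <-. simpl. destruct (vr_pair b dA cf) as [-> ->].
  split; [|split].
  - apply ctxmap_isMor, ctxmap_pair; auto.
  - rewrite (pr_pair A0 b cf). reflexivity.
  - reflexivity.
Qed.

Lemma FS_pair_eta (D G : ctx) A h :
  FS_isOb Sg G -> FS_isTy Sg G A -> FS_isMor Sg h D (FS_ext G A) ->
  FS_pair G A (FS_comp (FS_pr G A) h) (FS_msub (FS_vr G A) h) = h.
Proof.
  intros [pcG _] [A0 [-> _]] [_ [_ [hs [-> ch]]]]. simpl.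
  pose proof (ctxmap_length ch) as Hl. simpl in Hl. rewrite OV_ext, length_app in Hl.
  destruct (exists_last (l := hs)) as [ss [c ->]]; [intros ->; simpl in Hl; lia|].
  rewrite length_app in Hl; simpl in Hl.
  assert (Hl' : length (OV G) = length ss) by lia.
  unfold subst_el_ctx. rewrite map_map, OV_ext; simpl.
  rewrite map_sub_snoc, sub_snoc_last by auto using precontext_NoDup, fresh_not_in_OV.
  reflexivity.
Qed.

Lemma FS_pair_comp (E D G : ctx) A f a g :
  FS_isMor Sg f D G -> FS_isTm Sg D (FS_tsub A f) a -> FS_isMor Sg g E D ->
  FS_comp (FS_pair G A f a) g = FS_pair G A (FS_comp f g) (FS_msub a g).
Proof.
  intros [_ [_ [fs [-> _]]]] [A1 [b [_ [-> _]]]] [_ [_ [gs [-> _]]]].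
  destruct A. simpl. rewrite map_app. reflexivity.
Qed.

Theorem F_Sigma_is_cwf : is_cwf (F_Sigma Sg).
Proof.
  unfold is_cwf; simpl.
  split; [intros; eapply FS_comp_isMor; eauto|].
  split; [exact FS_id_isMor|].
  split; [intros; eapply FS_comp_assoc; eauto|].
  split; [intros; split; [eapply FS_comp_id_l|eapply FS_comp_id_r]; eauto|].
  split; [apply deriv_isOb, R1|].
  split; [exact FS_terminal|].
  split; [intros; eapply FS_tsub_isTy; eauto|].
  split; [intros; eapply FS_tsub_id; eauto|].
  split; [intros; eapply FS_tsub_comp; eauto|].
  split; [intros; eapply FS_msub_isTm; eauto|].
  split; [intros; eapply FS_msub_id; eauto|].
  split; [intros; eapply FS_msub_comp; eauto|].
  split; [intros; split; [apply FS_ext_isOb|apply FS_pr_isMor]; auto|].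
  split; [exact FS_vr_isTm|].
  split; [intros; apply FS_pair_spec; auto|].
  split; [intros; eapply FS_pair_eta; eauto|].
  intros; eapply FS_pair_comp; eauto.
Qed.

End Derivations.

Section Telescopes.
Variable C : cwf_data.

Lemma tele_end_app (As1 As2 : list (TyE C)) G0 :
  tele_end C G0 (As1 ++ As2) = tele_end C (tele_end C G0 As1) As2.
Proof. revert G0; induction As1; simpl; auto. Qed.

Lemma tele_app (As1 As2 : list (TyE C)) G0 :
  tele C G0 As1 -> tele C (tele_end C G0 As1) As2 -> tele C G0 (As1 ++ As2).
Proof. revert G0; induction As1; simpl; intros G0 H1 H2; auto. destruct H1; split; auto. Qed.

End Telescopes.

Section Contextuality.
Context (VS : VarSystem) (F T : Type) (Sg : presig VS F T).
Local Notation ctx := (ctx VS F T).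
Local Notation pretype := (pretype VS F T).

Fixpoint ctx_types (G : ctx) : list (ctx * pretype) :=
  match G with
  | CEmpty _ _ _ => []
  | CExt G' _ A => ctx_types G' ++ [(G', A)]
  end.

(* Comprehension in F_Sigma only appends declarations, so a telescope can be read off
   the context it ends in. *)
Lemma ctx_types_tele_end (As : list (ctx * pretype)) G0 :
  tele (F_Sigma Sg) G0 As -> ctx_types (tele_end (F_Sigma Sg) G0 As) = ctx_types G0 ++ As.
Proof.
  revert G0; induction As as [|A As IH]; simpl; intros G0 H; [rewrite app_nil_r; auto|].
  destruct H as [[A0 [-> _]] Ht]. rewrite IH by auto. simpl. rewrite <- app_assoc. reflexivity.
Qed.

Lemma ctx_types_tele (G : ctx) : de_Bruijn VS -> FS_isOb Sg G ->
  tele (F_Sigma Sg) (CEmpty VS F T) (ctx_types G) /\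
  tele_end (F_Sigma Sg) (CEmpty VS F T) (ctx_types G) = G.
Proof.
  intros HdB. induction G as [|G IH x A]; intros [pc d]; [simpl; auto|].
  inversion d as [|? ? ? dG dA Hx| | |]; subst.
  assert (x = fresh G) as -> by (apply HdB; auto).
  destruct IH as [IH1 IH2]; [split; [apply pc|exact dG]|].
  simpl. rewrite tele_end_app, IH2. split; [|reflexivity].
  apply tele_app; auto. rewrite IH2. simpl. split; auto. eexists; split; eauto.
Qed.

Theorem F_Sigma_contextual :
  is_cwf (F_Sigma Sg) -> de_Bruijn VS -> is_contextual_cwf (F_Sigma Sg).
Proof.
  intros Hcwf HdB. split; auto. intros G HG. exists (ctx_types G). split.
  - apply ctx_types_tele; auto.
  - intros As [Ht He]. pose proof (ctx_types_tele_end Ht) as E. rewrite He in E. auto.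
Qed.

End Contextuality.
Unset Implicit Arguments.

Theorem mainTheorem12 (VS : VarSystem) (F T : Type)
  (F_eq_dec : forall f g : F, {f = g} + {f <> g})
  (T_eq_dec : forall S S' : T, {S = S'} + {S <> S'})
  (Sg : presig VS F T) (HSg : is_signature Sg) :
  is_cwf (F_Sigma Sg) /\ (de_Bruijn VS -> is_contextual_cwf (F_Sigma Sg)).
Proof.
  destruct HSg as [[_ [Hfn _]] _].
  assert (Hcwf : is_cwf (F_Sigma Sg)).
  { apply F_Sigma_is_cwf. intros G f is_ U H. apply (Hfn _ _ _ _ H). }
  split; auto. intros; apply F_Sigma_contextual; auto.
Qed.
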